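(* The intuitionistic modal logic $\mathsf{mHC}$ is canonical and has the finite model property.
   Context: $\mathsf{mHC}$ is the smallest set of formulas (built from variables, $\bot,\to,\wedge,\vee,\Box$) containing all axioms of intuitionistic propositional logic, $\Box(A\to B)\to(\Box A\to\Box B)$, $A\to\Box A$ and $\Box A\to((B\to A)\vee B)$, closed under modus ponens, necessitation and substitution. Kripke semantics: frames $(W,\unlhd,\prec)$ with $\unlhd$ a partial order, $\prec$ a relation such that $w\unlhd v\prec x$ implies $w\prec x$; valuations into $\unlhd$-upsets; $\Box A=\{w\mid\forall x(w\prec x\Rightarrow x\in A)\}$. Canonical means the logic is valid in its canonical frame (prime theories of the logic ordered by inclusion, with $\Gamma\prec\Delta$ iff $\{A\mid\Box A\in\Gamma\}\subseteq\Delta$). The finite model property means every non-theorem fails in some finite frame validating the logic. *)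

From Stdlib Require Import List.

Inductive form : Type :=
| Var : nat -> form
| Bot : form
| Imp : form -> form -> form
| And : form -> form -> form
| Or  : form -> form -> form
| Box : form -> form.

Fixpoint subst (s : nat -> form) (A : form) : form :=
  match A with
  | Var n => s n
  | Bot => Bot
  | Imp A B => Imp (subst s A) (subst s B)
  | And A B => And (subst s A) (subst s B)
  | Or A B => Or (subst s A) (subst s B)
  | Box A => Box (subst s A)
  end.

Inductive ipc_axiom : form -> Prop :=
| ax_K A B : ipc_axiom (Imp A (Imp B A))
| ax_S A B C : ipc_axiom (Imp (Imp A (Imp B C)) (Imp (Imp A B) (Imp A C)))
| ax_andI A B : ipc_axiom (Imp A (Imp B (And A B)))
| ax_andE1 A B : ipc_axiom (Imp (And A B) A)
| ax_andE2 A B : ipc_axiom (Imp (And A B) B)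
| ax_orI1 A B : ipc_axiom (Imp A (Or A B))
| ax_orI2 A B : ipc_axiom (Imp B (Or A B))
| ax_orE A B C : ipc_axiom (Imp (Imp A C) (Imp (Imp B C) (Imp (Or A B) C)))
| ax_efq A : ipc_axiom (Imp Bot A).

Inductive mHC : form -> Prop :=
| mHC_ipc A : ipc_axiom A -> mHC A
| mHC_boxK A B : mHC (Imp (Box (Imp A B)) (Imp (Box A) (Box B)))
| mHC_boxI A : mHC (Imp A (Box A))
| mHC_mHC A B : mHC (Imp (Box A) (Or (Imp B A) B))
| mHC_mp A B : mHC (Imp A B) -> mHC A -> mHC B
| mHC_nec A : mHC A -> mHC (Box A)
| mHC_subst s A : mHC A -> mHC (subst s A).

Definition is_frame (W : Type) (le R : W -> W -> Prop) : Prop :=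
  (forall w, le w w) /\
  (forall u v w, le u v -> le v w -> le u w) /\
  (forall u v, le u v -> le v u -> u = v) /\
  (forall w v x, le w v -> R v x -> R w x).

Definition is_valuation (W : Type) (le : W -> W -> Prop) (V : nat -> W -> Prop) : Prop :=
  forall n w v, le w v -> V n w -> V n v.

Fixpoint forces (W : Type) (le R : W -> W -> Prop) (V : nat -> W -> Prop)
  (w : W) (A : form) : Prop :=
  match A with
  | Var n => V n w
  | Bot => False
  | Imp A B => forall v, le w v -> forces W le R V v A -> forces W le R V v B
  | And A B => forces W le R V w A /\ forces W le R V w B
  | Or A B => forces W le R V w A \/ forces W le R V w B
  | Box A => forall x, R w x -> forces W le R V x A
  end.

Definition valid_in (W : Type) (le R : W -> W -> Prop) (A : form) : Prop :=
  forall V, is_valuation W le V -> forall w, forces W le R V w A.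

Definition validates_mHC (W : Type) (le R : W -> W -> Prop) : Prop :=
  forall A, mHC A -> valid_in W le R A.

Definition finite_type (W : Type) : Prop := exists l : list W, forall w, In w l.

Definition prime_theory (G : form -> Prop) : Prop :=
  (forall A, mHC A -> G A) /\
  (forall A B, G (Imp A B) -> G A -> G B) /\
  ~ G Bot /\
  (forall A B, G (Or A B) -> G A \/ G B).

Definition canW : Type := { G : form -> Prop | prime_theory G }.
Definition can_le (G D : canW) : Prop := forall A, proj1_sig G A -> proj1_sig D A.
Definition can_R (G D : canW) : Prop := forall A, proj1_sig G (Box A) -> proj1_sig D A.

Definition mHC_canonical : Prop := validates_mHC canW can_le can_R.

Definition mHC_fmp : Prop :=
  forall A, ~ mHC A ->
    exists (W : Type) (le R : W -> W -> Prop),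
      finite_type W /\ is_frame W le R /\ validates_mHC W le R /\ ~ valid_in W le R A.

From Stdlib Require Import List Lia Classical ProofIrrelevance
  FunctionalExtensionality PropExtensionality.
From Stdlib Require Cantor.

(* A frame validates mHC as soon as R is contained in the order and every
   strictly larger point is an R-successor; in the canonical frame both
   conditions are forced by the axioms A -> Box A and Box A -> (B -> A) \/ B.
   For the finite model property, a non-theorem is refuted in a prime theory
   (Lindenbaum), and the canonical model is filtrated through the subformulas
   of the refuted formula.  The filtrated order is inclusion of traces,
   restricted so that strict extensions stay R-successors; the truth lemma
   then transfers the refutation to this finite frame. *)

Lemma pred_ext {X : Type} (S T : X -> Prop) : (forall x, S x <-> T x) -> S = T.
Proof. intro H; extensionality x; apply propositional_extensionality, H. Qed.

Lemma finite_type_of_injection {W X : Type} (f : W -> X) (xs : list X) :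
  (forall w1 w2, f w1 = f w2 -> w1 = w2) -> (forall w, In (f w) xs) ->
  finite_type W.
Proof.
  intros Hinj Hcov.
  assert (Hlist : forall ys, exists l, forall w, In (f w) ys -> In w l).
  { induction ys as [|y ys [l Hl]].
    - exists nil; intros w [].
    - destruct (classic (exists w0, f w0 = y)) as [[w0 Hw0]|Hy].
      + exists (w0 :: l); intros w [Hw|Hw]; [left; apply Hinj; congruence|right; auto].
      + exists l; intros w [Hw|Hw]; [exfalso; eauto|auto]. }
  destruct (Hlist xs) as [l Hl]; exists l; auto.
Qed.

Lemma subsets_of_list {X : Type} (l : list X) :
  exists ls : list (X -> Prop), forall S, (forall x, S x -> In x l) -> In S ls.
Proof.
  induction l as [|a l [ls Hls]].
  - exists ((fun _ => False) :: nil); intros S HS; left.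
    apply pred_ext; intro x; split; [contradiction|exact (HS x)].
  - exists (ls ++ map (fun S x => x = a \/ S x) ls); intros S HS.
    set (S' := fun x => S x /\ x <> a).
    assert (HS' : In S' ls).
    { apply Hls; intros x [Hx Hxa]; destruct (HS x Hx); [congruence|auto]. }
    apply in_or_app; destruct (classic (S a)) as [Ha|Ha].
    + right; replace S with (fun x => x = a \/ S' x);
        [exact (in_map (fun S x => x = a \/ S x) ls S' HS')|].
      apply pred_ext; intro x; unfold S'; split; [intros [->|[]]; auto|].
      intro Hx; destruct (classic (x = a)); auto.
    + left; replace S with S'; [exact HS'|].
      apply pred_ext; intro x; unfold S'; split; [tauto|].
      intro Hx; split; [auto|intros ->; contradiction].
Qed.

Fixpoint form_size (A : form) : nat :=
  match A with
  | Var _ | Bot => 1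
  | Imp B C | And B C | Or B C => S (form_size B + form_size C)
  | Box B => S (form_size B)
  end.

Fixpoint form_code (A : form) : nat :=
  match A with
  | Var n => Cantor.to_nat (0, n)
  | Bot => Cantor.to_nat (1, 0)
  | Imp B C => Cantor.to_nat (2, Cantor.to_nat (form_code B, form_code C))
  | And B C => Cantor.to_nat (3, Cantor.to_nat (form_code B, form_code C))
  | Or B C => Cantor.to_nat (4, Cantor.to_nat (form_code B, form_code C))
  | Box B => Cantor.to_nat (5, form_code B)
  end.

(* The fuel makes the recursion structural: the components of [Cantor.of_nat n]
   are not syntactically smaller than [n]. *)
Fixpoint form_decode (fuel n : nat) : form :=
  match fuel with
  | 0 => Bot
  | S fuel =>
      match Cantor.of_nat n with
      | (0, m) => Var m
      | (2, m) => let (a, b) := Cantor.of_nat m in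
                  Imp (form_decode fuel a) (form_decode fuel b)
      | (3, m) => let (a, b) := Cantor.of_nat m in
                  And (form_decode fuel a) (form_decode fuel b)
      | (4, m) => let (a, b) := Cantor.of_nat m in
                  Or (form_decode fuel a) (form_decode fuel b)
      | (5, m) => Box (form_decode fuel m)
      | _ => Bot
      end
  end.

Lemma form_decode_code A fuel : form_size A <= fuel -> form_decode fuel (form_code A) = A.
Proof.
  revert fuel; induction A; intros [|fuel] Hfuel; simpl in Hfuel; try lia;
    cbn [form_decode form_code]; rewrite ?Cantor.cancel_of_to; try reflexivity;
    rewrite ?Cantor.cancel_of_to; f_equal;
    first [apply IHA1 | apply IHA2 | apply IHA]; lia.
Qed.

Definition form_enum (n : nat) : form :=
  let (fuel, m) := Cantor.of_nat n in form_decode fuel m.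

Lemma form_enum_surj A : exists n, form_enum n = A.
Proof.
  exists (Cantor.to_nat (form_size A, form_code A)); unfold form_enum.
  rewrite Cantor.cancel_of_to; apply form_decode_code; lia.
Qed.

(** * Derivability from hypotheses and Lindenbaum's lemma *)

Inductive Der (G : form -> Prop) : form -> Prop :=
| Der_hyp A : G A -> Der G A
| Der_thm A : mHC A -> Der G A
| Der_mp A B : Der G (Imp A B) -> Der G A -> Der G B.

Lemma Der_axiom G A : ipc_axiom A -> Der G A.
Proof. intro HA; apply Der_thm, mHC_ipc, HA. Qed.

Lemma mHC_imp_refl A : mHC (Imp A A).
Proof.
  apply (mHC_mp (Imp A (Imp A A))); [apply (mHC_mp (Imp A (Imp (Imp A A) A)))|];
    apply mHC_ipc; constructor.
Qed.

Lemma mHC_of_Der_empty A : Der (fun _ => False) A -> mHC A.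
Proof. intro D; induction D; [contradiction|auto|eapply mHC_mp; eauto]. Qed.

Lemma Der_mono (G G' : form -> Prop) A : (forall X, G X -> G' X) -> Der G A -> Der G' A.
Proof. intros H D; induction D; [apply Der_hyp|apply Der_thm|eapply Der_mp]; eauto. Qed.

Lemma Der_deduction G B C : Der (fun X => G X \/ X = B) C -> Der G (Imp B C).
Proof.
  intro D; induction D as [A [HA| ->]|A HA|A C' _ IH1 _ IH2].
  - apply (Der_mp _ A); [apply Der_axiom; constructor|apply Der_hyp, HA].
  - apply Der_thm, mHC_imp_refl.
  - apply (Der_mp _ A); [apply Der_axiom; constructor|apply Der_thm, HA].
  - apply (Der_mp _ (Imp B A)); [apply (Der_mp _ (Imp B (Imp A C')))|];
      [apply Der_axiom; constructor|exact IH1|exact IH2].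
Qed.

Lemma Der_chain_compact (ch : nat -> form -> Prop) :
  (forall n m X, n <= m -> ch n X -> ch m X) ->
  forall A, Der (fun X => exists n, ch n X) A -> exists n, Der (ch n) A.
Proof.
  intros Hch A D; induction D as [A [n HA]|A HA|A B _ [n1 IH1] _ [n2 IH2]].
  - exists n; apply Der_hyp, HA.
  - exists 0; apply Der_thm, HA.
  - exists (max n1 n2); apply (Der_mp _ A).
    + eapply Der_mono; [|exact IH1]; intros X HX; eapply Hch; [|exact HX]; lia.
    + eapply Der_mono; [|exact IH2]; intros X HX; eapply Hch; [|exact HX]; lia.
Qed.

Lemma prime_theory_of_maximal H C :
  ~ Der H C -> (forall X, ~ H X -> Der H (Imp X C)) -> prime_theory H.
Proof.
  intros HC Hmax.
  assert (Hclosed : forall X, Der H X -> H X).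
  { intros X DX; apply NNPP; intro HX; exact (HC (Der_mp _ _ _ (Hmax X HX) DX)). }
  split; [|split; [|split]].
  - intros A HA; apply Hclosed, Der_thm, HA.
  - intros A B HAB HA; apply Hclosed; apply (Der_mp _ A); apply Der_hyp; auto.
  - intro Hbot; apply HC; apply (Der_mp _ Bot); [apply Der_axiom; constructor|apply Der_hyp, Hbot].
  - intros A B HAB; apply NNPP; intro Hn; apply HC.
    apply (Der_mp _ (Or A B)); [|apply Der_hyp, HAB].
    apply (Der_mp _ (Imp B C)); [apply (Der_mp _ (Imp A C))|];
      [apply Der_axiom; constructor|apply Hmax|apply Hmax]; tauto.
Qed.

Fixpoint lind_chain (G : form -> Prop) (C : form) (n : nat) : form -> Prop :=
  match n with
  | 0 => G
  | S k => fun X => lind_chain G C k X \/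
             (X = form_enum k /\ ~ Der (fun Y => lind_chain G C k Y \/ Y = form_enum k) C)
  end.

Lemma lind_chain_mono G C n m X : n <= m -> lind_chain G C n X -> lind_chain G C m X.
Proof. induction 1; simpl; auto. Qed.

Lemma lind_chain_not_Der G C : ~ Der G C -> forall n, ~ Der (lind_chain G C n) C.
Proof.
  intros HGC n; induction n as [|n IH]; simpl; auto.
  intro D; destruct (classic (Der (fun Y => lind_chain G C n Y \/ Y = form_enum n) C)) as [Dn|Dn].
  - apply IH; eapply Der_mono; [|exact D]; intros X [HX|[_ HX]]; tauto.
  - apply Dn; eapply Der_mono; [|exact D]; intros X [HX|[HX _]]; auto.
Qed.

Lemma lindenbaum G C :
  ~ Der G C -> exists H, prime_theory H /\ (forall X, G X -> H X) /\ ~ H C.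
Proof.
  intro HGC; set (H := fun X => exists n, lind_chain G C n X).
  assert (HC : ~ Der H C).
  { intro D; destruct (Der_chain_compact _ (lind_chain_mono G C) C D) as [n Dn].
    exact (lind_chain_not_Der G C HGC n Dn). }
  assert (Hmax : forall X, ~ H X -> Der H (Imp X C)).
  { intros X HX; destruct (form_enum_surj X) as [k <-]; apply Der_deduction.
    assert (Dk : Der (fun Y => lind_chain G C k Y \/ Y = form_enum k) C).
    { apply NNPP; intro Dk; apply HX; exists (S k); right; auto. }
    eapply Der_mono; [|exact Dk]; intros Y [HY|HY]; [left; exists k|right]; auto. }
  exists H; split; [exact (prime_theory_of_maximal H C HC Hmax)|split].
  - intros X HX; exists 0; exact HX.
  - intro HCin; apply HC, Der_hyp, HCin.
Qed.

(** * Frames validating mHC *)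

Section FrameSoundness.
Variables (W : Type) (le R : W -> W -> Prop).
Hypothesis refl_le : forall w, le w w.
Hypothesis trans_le : forall u v w, le u v -> le v w -> le u w.
Hypothesis le_R_comp : forall w v x, le w v -> R v x -> R w x.
Hypothesis R_sub_le : forall w v, R w v -> le w v.
Hypothesis lt_sub_R : forall w v, le w v -> ~ le v w -> R w v.

Lemma forces_mono V : is_valuation W le V ->
  forall A w v, le w v -> forces W le R V w A -> forces W le R V v A.
Proof.
  intros HV A; induction A; simpl; intros w v Hwv Hw.
  - exact (HV _ _ _ Hwv Hw).
  - exact Hw.
  - intros u Hvu; apply Hw, (trans_le _ _ _ Hwv Hvu).
  - split; [apply (IHA1 w)|apply (IHA2 w)]; tauto.
  - destruct Hw; [left; apply (IHA1 w)|right; apply (IHA2 w)]; auto.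
  - intros x Hvx; apply Hw, (le_R_comp _ _ _ Hwv Hvx).
Qed.

Lemma forces_subst V s A w :
  forces W le R V w (subst s A) <-> forces W le R (fun n u => forces W le R V u (s n)) w A.
Proof.
  revert w; induction A; simpl; intro w; try tauto.
  - split; intros H v Hv HA; apply IHA2, H, IHA1; auto.
  - rewrite IHA1, IHA2; tauto.
  - rewrite IHA1, IHA2; tauto.
  - split; intros H x Hx; apply IHA, H; auto.
Qed.

Lemma ipc_axiom_valid A : ipc_axiom A -> valid_in W le R A.
Proof.
  intros HA V HV w; destruct HA; simpl; try tauto.
  - intros v _ HA u Hvu _; exact (forces_mono V HV A v u Hvu HA).
  - intros v1 _ HABC v2 H12 HAB v3 H23 HA.
    exact (HABC v3 (trans_le _ _ _ H12 H23) HA v3 (refl_le v3) (HAB v3 H23 HA)).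
  - intros v1 _ HA v2 H12 HB; exact (conj (forces_mono V HV A v1 v2 H12 HA) HB).
  - intros v1 _ HAC v2 H12 HBC v3 H23 [HA|HB].
    + exact (HAC v3 (trans_le _ _ _ H12 H23) HA).
    + exact (HBC v3 H23 HB).
Qed.

Lemma mHC_sound A : mHC A -> valid_in W le R A.
Proof.
  intro HA; induction HA as [A HA|A B|A|A B|A B _ IHAB _ IHA|A _ IHA|s A _ IHA];
    intros V HV w; simpl.
  - exact (ipc_axiom_valid A HA V HV w).
  - intros v1 _ HAB v2 H12 HA x Hx.
    exact (HAB x (le_R_comp _ _ _ H12 Hx) x (refl_le x) (HA x Hx)).
  - intros v _ HA x Hx; exact (forces_mono V HV _ _ _ (R_sub_le _ _ Hx) HA).
  - intros v _ HA; destruct (classic (forces W le R V v B)) as [HB|HB];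
      [right; exact HB|left].
    intros u Hvu HBu; apply HA, lt_sub_R; auto.
    intro Huv; exact (HB (forces_mono V HV _ _ _ Huv HBu)).
  - exact (IHAB V HV w w (refl_le w) (IHA V HV w)).
  - intros x _; apply IHA, HV.
  - apply forces_subst, IHA; intros n u v Huv; apply forces_mono; auto.
Qed.
End FrameSoundness.

(** * Prime theories and the canonical frame *)

Section PrimeTheory.
Variable G : form -> Prop.
Hypothesis HG : prime_theory G.

Lemma theory_mHC A : mHC A -> G A.
Proof. apply HG. Qed.

Lemma theory_mp A B : G (Imp A B) -> G A -> G B.
Proof. apply HG. Qed.

Lemma theory_bot : ~ G Bot.
Proof. apply HG. Qed.

Lemma theory_axiom A : ipc_axiom A -> G A.
Proof. intro HA; apply theory_mHC, mHC_ipc, HA. Qed.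

Lemma theory_and A B : G (And A B) <-> G A /\ G B.
Proof.
  split.
  - intro H; split; eapply theory_mp; eauto; apply theory_axiom; constructor.
  - intros [HA HB]; apply (theory_mp B); [apply (theory_mp A)|]; auto.
    apply theory_axiom; constructor.
Qed.

Lemma theory_or A B : G (Or A B) <-> G A \/ G B.
Proof.
  split; [apply HG|].
  intros [H|H]; eapply theory_mp; eauto; apply theory_axiom; constructor.
Qed.

Lemma theory_imp_intro A B : G B -> G (Imp A B).
Proof. apply theory_mp, theory_axiom; constructor. Qed.

Lemma theory_box_intro A : G A -> G (Box A).
Proof. apply theory_mp, theory_mHC, mHC_boxI. Qed.

Lemma theory_Der A : Der G A -> G A.
Proof. intro D; induction D; [auto|apply theory_mHC|eapply theory_mp]; eauto. Qed.

Lemma theory_Der_unbox B : Der (fun A => G (Box A)) B -> G (Box B).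
Proof.
  intro D; induction D as [A HA|A HA|A B _ IH1 _ IH2]; auto.
  - apply theory_mHC, mHC_nec, HA.
  - apply (theory_mp (Box A)); [apply (theory_mp (Box (Imp A B)))|]; auto.
    apply theory_mHC, mHC_boxK.
Qed.
End PrimeTheory.

(* The role of the axiom Box B -> (C -> B) \/ C: a prime extension that adds any
   new formula C is already a Box-successor. *)
Lemma box_transfer G H C B :
  prime_theory G -> prime_theory H -> (forall X, G X -> H X) ->
  H C -> ~ G C -> G (Box B) -> H B.
Proof.
  intros pG pH GH HC GC GB.
  assert (GCB_C : G (Or (Imp C B) C))
    by exact (theory_mp G pG _ _ (theory_mHC G pG _ (mHC_mHC B C)) GB).
  apply (theory_or G pG) in GCB_C as [GCB|GC']; [|contradiction].
  exact (theory_mp H pH C B (GH _ GCB) HC).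
Qed.

Lemma mHC_is_canonical : mHC_canonical.
Proof.
  intros A HA; apply mHC_sound; unfold can_le, can_R; auto.
  - intros [G pG] D HGD B HB; apply HGD, theory_box_intro; auto.
  - intros [G pG] [D pD] HGD HDG B HB; simpl in *.
    apply not_all_ex_not in HDG as [C HC]; apply imply_to_and in HC as [HDC HGC].
    exact (box_transfer G D C B pG pD HGD HDC HGC HB).
Qed.

(** * Filtration through a subformula-closed list *)

Fixpoint subformulas (A : form) : list form :=
  A :: match A with
       | Imp B C | And B C | Or B C => subformulas B ++ subformulas C
       | Box B => subformulas B
       | _ => nil
       end.

Lemma subformulas_self A : In A (subformulas A).
Proof. destruct A; left; reflexivity. Qed.

Lemma subformulas_trans A B C :
  In B (subformulas A) -> In C (subformulas B) -> In C (subformulas A).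
Proof.
  revert B; induction A; simpl; intros B [<-|HB] HC; auto; try contradiction;
    try (right; eapply IHA; eauto; fail).
  all: right; apply in_app_or in HB as [HB|HB]; apply in_or_app; eauto.
Qed.

Definition subformula_closed (L : list form) : Prop :=
  forall A, In A L -> forall B, In B (subformulas A) -> In B L.

Lemma subformulas_closed A : subformula_closed (subformulas A).
Proof. intros B HB C HC; eapply subformulas_trans; eauto. Qed.

Ltac subformula_of HL H :=
  apply (HL _ H); simpl; auto using in_or_app, subformulas_self.

Section Filtration.
Variable L : list form.
Hypothesis HL : subformula_closed L.

Definition filt_world : Type :=
  {S : form -> Prop | exists G, prime_theory G /\ forall B, S B <-> G B /\ In B L}.

Definition trace (G : form -> Prop) (pG : prime_theory G) : filt_world :=
  exist _ (fun X => G X /\ In X L) (ex_intro _ G (conj pG (fun B => iff_refl _))).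

Definition filt_incl (S T : filt_world) : Prop :=
  forall B, proj1_sig S B -> proj1_sig T B.

Definition filt_R (S T : filt_world) : Prop :=
  filt_incl S T /\ forall B, proj1_sig S (Box B) -> proj1_sig T B.

(* Strictly larger traces are required to be R-successors, which is what
   validating the axiom Box A -> (B -> A) \/ B demands of a frame. *)
Definition filt_le (S T : filt_world) : Prop :=
  filt_incl S T /\ (filt_incl T S \/ filt_R S T).

Definition filt_val (n : nat) (S : filt_world) : Prop := proj1_sig S (Var n).

Lemma filt_world_ext (S T : filt_world) : filt_incl S T -> filt_incl T S -> S = T.
Proof.
  destruct S as [S pS], T as [T pT]; unfold filt_incl; simpl; intros HST HTS.
  assert (S = T) as <- by (apply pred_ext; split; auto).
  f_equal; apply proof_irrelevance.
Qed.

Lemma filt_le_refl w : filt_le w w.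
Proof. split; [|left]; intros B; auto. Qed.

Lemma filt_le_trans u v w : filt_le u v -> filt_le v w -> filt_le u w.
Proof.
  intros [i1 [b1|[_ c1]]] [i2 [b2|[_ c2]]]; split; unfold filt_incl in *; auto.
  all: right; split; unfold filt_incl; auto; intros B HB.
  all: first [apply i2, c1, HB | apply c2, i1, HB].
Qed.

Lemma filt_le_R_comp w v x : filt_le w v -> filt_R v x -> filt_R w x.
Proof. intros [i1 _] [i2 c2]; split; intros B HB; auto. Qed.

Lemma filt_R_sub_le w v : filt_R w v -> filt_le w v.
Proof. intro Hwv; split; [apply Hwv|right; exact Hwv]. Qed.

Lemma filt_lt_sub_R w v : filt_le w v -> ~ filt_le v w -> filt_R w v.
Proof.
  intros [i [b|c]] Hvw; [|exact c].
  exfalso; apply Hvw; split; [exact b|left; exact i].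
Qed.

Lemma filt_frame : is_frame filt_world filt_le filt_R.
Proof.
  split; [exact filt_le_refl|split; [exact filt_le_trans|split; [|exact filt_le_R_comp]]].
  intros u v [i1 _] [i2 _]; apply filt_world_ext; auto.
Qed.

Lemma filt_validates_mHC : validates_mHC filt_world filt_le filt_R.
Proof.
  intros A HA; apply mHC_sound; [exact filt_le_refl|exact filt_le_trans|exact filt_le_R_comp
    |exact filt_R_sub_le|exact filt_lt_sub_R|exact HA].
Qed.

Lemma filt_finite : finite_type filt_world.
Proof.
  destruct (subsets_of_list L) as [ls Hls].
  apply (finite_type_of_injection (@proj1_sig _ _) ls).
  - intros S T HST; apply filt_world_ext; intros B; rewrite HST; auto.
  - intros [S [G [pG HS]]]; apply Hls; intros B HB; apply HS, HB.
Qed.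

Lemma filt_val_valuation : is_valuation filt_world filt_le filt_val.
Proof. intros n w v [i _]; apply i. Qed.

Lemma filt_and (w : filt_world) B C :
  In (And B C) L -> (proj1_sig w (And B C) <-> proj1_sig w B /\ proj1_sig w C).
Proof.
  intro HBC; destruct (proj2_sig w) as [G [pG Hw]].
  assert (LB : In B L) by subformula_of HL HBC; assert (LC : In C L) by subformula_of HL HBC.
  rewrite !Hw, theory_and; tauto.
Qed.

Lemma filt_or (w : filt_world) B C :
  In (Or B C) L -> (proj1_sig w (Or B C) <-> proj1_sig w B \/ proj1_sig w C).
Proof.
  intro HBC; destruct (proj2_sig w) as [G [pG Hw]].
  assert (LB : In B L) by subformula_of HL HBC; assert (LC : In C L) by subformula_of HL HBC.
  rewrite !Hw, theory_or; tauto.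
Qed.

Lemma filt_mp (w : filt_world) B C :
  In (Imp B C) L -> proj1_sig w (Imp B C) -> proj1_sig w B -> proj1_sig w C.
Proof.
  intros HBC; destruct (proj2_sig w) as [G [pG Hw]].
  assert (LC : In C L) by subformula_of HL HBC.
  rewrite !Hw; intros [GBC _] [GB _]; split; [exact (theory_mp G pG B C GBC GB)|auto].
Qed.

Lemma filt_imp_witness (w : filt_world) B C :
  In (Imp B C) L -> ~ proj1_sig w (Imp B C) ->
  exists v, filt_le w v /\ proj1_sig v B /\ ~ proj1_sig v C.
Proof.
  intros HBC Hn; destruct (proj2_sig w) as [G [pG Hw]].
  assert (LB : In B L) by subformula_of HL HBC; assert (LC : In C L) by subformula_of HL HBC.
  destruct (classic (G B)) as [GB|GB].
  - exists w; split; [apply filt_le_refl|split; [apply Hw; auto|]].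
    rewrite Hw; intros [GC _]; apply Hn, Hw; split; [apply theory_imp_intro|]; auto.
  - destruct (lindenbaum (fun X => G X \/ X = B) C) as [T [pT [GT TC]]].
    { intro D; apply Hn, Hw; split; [apply (theory_Der G pG), Der_deduction, D|auto]. }
    exists (trace T pT); simpl; split; [split|split].
    + intros X HX; apply Hw in HX as [GX LX]; split; [apply GT; left|]; auto.
    + right; split; intros X HX; apply Hw in HX as [GX LX]; split.
      * apply GT; left; exact GX.
      * exact LX.
      * apply (box_transfer G T B X pG pT); auto.
      * subformula_of HL LX.
    + split; [apply GT; right|]; auto.
    + tauto.
Qed.

Lemma filt_box_witness (w : filt_world) B :
  In (Box B) L -> ~ proj1_sig w (Box B) -> exists v, filt_R w v /\ ~ proj1_sig v B.
Proof.
  intros HB Hn; destruct (proj2_sig w) as [G [pG Hw]].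
  destruct (lindenbaum (fun X => G (Box X)) B) as [T [pT [GT TB]]].
  { intro D; apply Hn, Hw; split; [apply (theory_Der_unbox G pG), D|auto]. }
  exists (trace T pT); simpl; split; [split|tauto]; intros X HX;
    apply Hw in HX as [GX LX]; split; auto.
  - apply GT, theory_box_intro; auto.
  - subformula_of HL LX.
Qed.

Lemma filt_truth A :
  In A L -> forall w, forces filt_world filt_le filt_R filt_val w A <-> proj1_sig w A.
Proof.
  induction A as [n| |B IHB C IHC|B IHB C IHC|B IHB C IHC|B IHB]; intros HA w; simpl.
  - reflexivity.
  - split; [contradiction|]; destruct (proj2_sig w) as [G [pG Hw]].
    rewrite Hw; intros [GBot _]; exact (theory_bot G pG GBot).
  - assert (LB : In B L) by subformula_of HL HA; assert (LC : In C L) by subformula_of HL HA.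
    split.
    + intro Hf; apply NNPP; intro Hn.
      destruct (filt_imp_witness w B C HA Hn) as [v [Hwv [HvB HvC]]].
      apply HvC, IHC, (Hf v Hwv), IHB; auto.
    + intros Hw v [Hwv _] HvB; apply IHC; auto.
      apply (filt_mp v B C HA); [apply Hwv, Hw|apply IHB; auto].
  - assert (LB : In B L) by subformula_of HL HA; assert (LC : In C L) by subformula_of HL HA.
    rewrite IHB, IHC, filt_and; auto; reflexivity.
  - assert (LB : In B L) by subformula_of HL HA; assert (LC : In C L) by subformula_of HL HA.
    rewrite IHB, IHC, filt_or; auto; reflexivity.
  - assert (LB : In B L) by subformula_of HL HA.
    split.
    + intro Hf; apply NNPP; intro Hn.
      destruct (filt_box_witness w B HA Hn) as [v [Hwv HvB]].
      apply HvB, IHB, Hf; auto.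
    + intros Hw v [_ Hwv]; apply IHB, Hwv, Hw; auto.
Qed.
End Filtration.

Lemma mHC_has_fmp : mHC_fmp.
Proof.
  intros A HA.
  destruct (lindenbaum (fun _ => False) A) as [G [pG [_ HGA]]].
  { intro D; apply HA, mHC_of_Der_empty, D. }
  set (L := subformulas A).
  exists (filt_world L), (filt_le L), (filt_R L).
  split; [apply filt_finite|split; [apply filt_frame|split; [apply filt_validates_mHC|]]].
  intro Hvalid; apply HGA.
  apply (filt_truth L (subformulas_closed A) A (subformulas_self A) (trace L G pG)).
  apply Hvalid, filt_val_valuation.
Qed.

Theorem corollary4p13 : mHC_canonical /\ mHC_fmp.
Proof.
  split; [exact mHC_is_canonical|exact mHC_has_fmp].
Qed.
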